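(* Let $n\ge 4$, $N=\{1,\dots,n\}$, fix distinct $i_1,i_2\in N$ and let $\hat N^c=N\setminus\{i_1,i_2\}$. Then the inequality $$x_{i_2i_1}+\sum_{j\in\hat N^c}\left(x_{i_1j}+x_{ji_1}\right)-\sum_{j\in\hat N^c}x_{i_2j}-\sum_{j,j'\in\hat N^c:\,j\ne j'} x_{jj'}\le 2-\frac{(n-3)(n-4)}{2}$$ is a valid inequality for the weak order polytope $P^n_{WO}$, i.e. it holds for every point $x\in P^n_{WO}$.
   Context: Let $N=\{1,\dots,n\}$ and $A_N=\{(i,j): i,j\in N, i\ne j\}$. A weak order on $N$ is a binary relation $W\subseteq N\times N$ that is reflexive, transitive and total; $(i,j)\in W$ is read ''$i$ is preferred over or tied with $j$''. The characteristic vector of $W$ is $x^W\in\{0,1\}^{A_N}$ with $x^W_{(i,j)}=1$ if $(i,j)\in W$ and $0$ otherwise. The weak order polytope $P^n_{WO}$ is the convex hull of the characteristic vectors of all weak orders on $N$; its points are vectors $x\in\mathbb{R}^{A_N}$ and $x_{ij}$ denotes the coordinate $x_{(i,j)}$. *)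

(* Points of R^{A_N} are represented as functions
   x : 'I_n -> 'I_n -> R; only off-diagonal values (i != j) are coordinates. *)
From mathcomp Require Import all_boot all_order all_algebra.
Set Implicit Arguments. Unset Strict Implicit. Unset Printing Implicit Defensive.
Import Order.TTheory GRing.Theory Num.Theory.
Local Open Scope ring_scope.

Definition weak_order (n : nat) (W : rel 'I_n) : Prop :=
  reflexive W /\ transitive W /\ total W.

Definition char_vec (R : pzRingType) (n : nat) (W : rel 'I_n) : 'I_n -> 'I_n -> R :=
  fun i j => (W i j)%:R.

Definition in_weak_order_polytope (R : realFieldType) (n : nat)
    (x : 'I_n -> 'I_n -> R) : Prop :=
  exists (k : nat) (W : 'I_k -> rel 'I_n) (lam : 'I_k -> R),
    [/\ forall t, weak_order (W t),
        forall t, 0 <= lam t,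
        \sum_(t < k) lam t = 1 &
        forall i j : 'I_n, i != j ->
          x i j = \sum_(t < k) lam t * char_vec R (W t) i j].

(* By linearity it suffices to bound the left-hand side at the characteristic
   vector of a weak order W.  Let m = n - 2 be the number of indices outside
   {i1, i2} and E the number of those tied with i1.  Every pair of indices is
   comparable, so the terms x_{i1 j} + x_{j i1} add up to m + E and the pairs
   inside the complement contribute at least m(m-1)/2; the E indices tied with
   i1 are pairwise tied, adding E(E-1)/2 more.  If i2 is weakly above i1 it is
   weakly above all E indices tied with i1, so the x_{i2 j} remove at least
   x_{i2 i1} E.  What remains, x_{i2 i1}(1 - E) + E - E(E-1)/2 plus
   m - m(m-1)/2 = 1 - (m-1)(m-2)/2, is at most 2 - (n-3)(n-4)/2 because E is
   an integer. *)

From mathcomp Require Import all_boot all_order all_algebra.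
From mathcomp Require Import zify lra.
Set Implicit Arguments. Unset Strict Implicit. Unset Printing Implicit Defensive.
Import Order.TTheory GRing.Theory Num.Theory.
Local Open Scope ring_scope.

Section DistinctPairs.

Variables (R : numDomainType) (T : finType).

Definition sum_distinct_pairs (A : {set T}) (F : T -> T -> R) : R :=
  \sum_(j in A) \sum_(j' in A | j' != j) F j j'.

Lemma sum_bool_card (A : {set T}) (P : pred T) :
  \sum_(j in A) (P j)%:R = #|[set j in A | P j]|%:R :> R.
Proof.
rewrite -sum1_card natr_sum [RHS]big_mkcond [LHS]big_mkcond /=.
by apply: eq_bigr => j _; rewrite inE; case: (j \in A) => //; case: (P j).
Qed.

Lemma ler_sum_subset (A B : {set T}) (P : pred T) (F : T -> R) :
  B \subset A -> (forall j, j \in A -> 0 <= F j) ->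
  \sum_(j in B | P j) F j <= \sum_(j in A | P j) F j.
Proof.
move=> BA F_ge0; rewrite [X in _ <= X](big_setIDcond _ _ B) (setIidPr BA) lerDl.
by apply: sumr_ge0 => j /andP[/setDP[jA _] _]; apply: F_ge0.
Qed.

Lemma sum_distinct_pairsD (A : {set T}) (F G : T -> T -> R) :
  sum_distinct_pairs A (fun j j' => F j j' + G j j')
  = sum_distinct_pairs A F + sum_distinct_pairs A G.
Proof.
rewrite /sum_distinct_pairs -big_split.
by apply: eq_bigr => j _; rewrite big_split.
Qed.

Lemma sum_distinct_pairsC (A : {set T}) (F : T -> T -> R) :
  sum_distinct_pairs A F = sum_distinct_pairs A (fun j j' => F j' j).
Proof.
rewrite /sum_distinct_pairs (exchange_big_dep (mem A)) => [|j j' _ /andP[]//].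
apply: eq_bigr => j jA; apply: eq_bigl => j'.
by rewrite (_ : j \in A = true) //= eq_sym.
Qed.

Lemma sum_distinct_pairs1 (A : {set T}) :
  sum_distinct_pairs A (fun _ _ => 1) = #|A|%:R * (#|A|%:R - 1).
Proof.
rewrite /sum_distinct_pairs.
have inner j : j \in A -> \sum_(j' in A | j' != j) 1 = #|A|%:R - 1 :> R.
  move=> jA; rewrite (cardsD1 j A) jA natrD addrAC subrr add0r.
  by rewrite -sumr_const; apply: eq_bigl => j'; rewrite !inE andbC.
by rewrite (eq_bigr _ inner) sumr_const mulr_natl.
Qed.

Lemma sum_distinct_pairs_subset (A B : {set T}) (F : T -> T -> R) :
  B \subset A -> (forall j j', 0 <= F j j') ->
  sum_distinct_pairs B F <= sum_distinct_pairs A F.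
Proof.
move=> BA F_ge0; rewrite /sum_distinct_pairs.
rewrite [X in _ <= X](big_setID B) (setIidPr BA).
apply: ler_wpDr; first by apply: sumr_ge0 => j _; apply: sumr_ge0.
by apply: ler_sum => j _; apply: ler_sum_subset.
Qed.

End DistinctPairs.

Lemma sum_weighted_exchange (R : pzSemiRingType) (I J : finType) (P : pred I)
    (lam : J -> R) (F : I -> R) (G : I -> J -> R) :
  (forall s, P s -> F s = \sum_t lam t * G s t) ->
  \sum_(s | P s) F s = \sum_t lam t * \sum_(s | P s) G s t.
Proof.
move=> FG; rewrite (eq_bigr _ FG) exchange_big.
by apply: eq_bigr => t _; rewrite mulr_sumr.
Qed.

Lemma convex_sum_le (R : numDomainType) (J : finType) (lam a : J -> R) (r : R) :
  (forall t, 0 <= lam t) -> \sum_t lam t = 1 -> (forall t, a t <= r) ->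
  \sum_t lam t * a t <= r.
Proof.
move=> lam_ge0 lam_sum1 a_le; rewrite -[r]mul1r -lam_sum1 mulr_suml.
by apply: ler_sum => t _; apply: ler_wpM2l.
Qed.

Definition tied (T : Type) (W : rel T) : rel T := fun i j => W i j && W j i.

Definition others (n : nat) (i1 i2 : 'I_n) : {set 'I_n} :=
  [set j | (j != i1) && (j != i2)].

Lemma card_others (n : nat) (i1 i2 : 'I_n) :
  i1 != i2 -> #|others i1 i2| = (n - 2)%N.
Proof.
move=> i12; have -> : others i1 i2 = ~: [set i1; i2].
  by apply/setP => j; rewrite !inE negb_or.
by rewrite -[in RHS](card_ord n) -(cardsC [set i1; i2]) cards2 i12 addKn.
Qed.

Definition wo_form (R : numDomainType) (n : nat) (i1 i2 : 'I_n)
    (x : 'I_n -> 'I_n -> R) : R :=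
  x i2 i1 + \sum_(j in others i1 i2) (x i1 j + x j i1)
    - \sum_(j in others i1 i2) x i2 j - sum_distinct_pairs (others i1 i2) x.

Lemma tie_count_bound (R : realFieldType) (a : bool) (e : nat) :
  a%:R * (1 - e%:R) + e%:R - e%:R * (e%:R - 1) / 2 <= 1 :> R.
Proof.
case: e => [|[|e]]; first by case: a => /=; lra.
  by case: a => /=; lra.
have e_ge2 : 2 <= e.+2%:R :> R by rewrite (ler_nat R 2).
by case: a => /=; nra.
Qed.

Section WeakOrderVertex.

Variables (R : realFieldType) (n : nat) (W : rel 'I_n).
Hypotheses (W_trans : transitive W) (W_total : total W).

Local Notation b := (char_vec R W).

Lemma char_vec_addC (i j : 'I_n) : b i j + b j i = 1 + (tied W i j)%:R.
Proof.
rewrite /char_vec /tied; have := W_total i j.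
by case: (W i j); case: (W j i) => //= _; rewrite ?addr0 ?add0r.
Qed.

Lemma tied_common (i j j' : 'I_n) : tied W i j -> tied W i j' -> tied W j j'.
Proof.
case/andP=> Wij Wji /andP[Wij' Wj'i].
by rewrite /tied (W_trans Wji Wij') (W_trans Wj'i Wij).
Qed.

Lemma sum_char_vec_addC (i : 'I_n) (A : {set 'I_n}) :
  \sum_(j in A) (b i j + b j i) = #|A|%:R + #|[set j in A | tied W i j]|%:R.
Proof.
under eq_bigr do rewrite char_vec_addC.
by rewrite big_split sumr_const sum_bool_card.
Qed.

Lemma sum_char_vec_row_ge (i0 i : 'I_n) (A : {set 'I_n}) :
  b i0 i * #|[set j in A | tied W i j]|%:R <= \sum_(j in A) b i0 j.
Proof.
rewrite -sum_bool_card mulr_sumr; apply: ler_sum => j _.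
rewrite /char_vec /tied -natrM ler_nat.
case Wi0i: (W i0 i); case Wij: (W i j) => //=.
by rewrite (W_trans Wi0i Wij) mul1n leq_b1.
Qed.

Lemma sum_distinct_pairs_char_vec_ge (A B : {set 'I_n}) :
  B \subset A -> {in B &, forall j j', tied W j j'} ->
  #|A|%:R * (#|A|%:R - 1) + #|B|%:R * (#|B|%:R - 1)
    <= 2 * sum_distinct_pairs A b.
Proof.
move=> BA B_tied.
have -> : 2 * sum_distinct_pairs A b
    = sum_distinct_pairs A (fun j j' => 1 + (tied W j j')%:R).
  rewrite mulr_natl mulr2n {2}sum_distinct_pairsC -sum_distinct_pairsD.
  by apply: eq_bigr => j _; apply: eq_bigr => j' _; rewrite char_vec_addC.
rewrite sum_distinct_pairsD sum_distinct_pairs1 lerD2l -sum_distinct_pairs1.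
have -> : sum_distinct_pairs B (fun _ _ => 1)
    = sum_distinct_pairs B (fun j j' => (tied W j j')%:R :> R).
  by apply: eq_bigr => j jB; apply: eq_bigr => j' /andP[j'B _]; rewrite B_tied.
by apply: sum_distinct_pairs_subset => // j j'; rewrite ler0n.
Qed.

Lemma wo_form_char_vec_le (i1 i2 : 'I_n) :
  (4 <= n)%N -> i1 != i2 -> wo_form i1 i2 b <= 2 - ((n - 3) * (n - 4))%:R / 2.
Proof.
move=> n4 i12; rewrite /wo_form sum_char_vec_addC.
set T := [set j in others i1 i2 | tied W i1 j].
have T_sub : T \subset others i1 i2.
  by apply/subsetP => j; rewrite inE => /andP[].
have T_tied : {in T &, forall j j', tied W j j'}.
  move=> j j'; rewrite !inE => /andP[_ ij] /andP[_ ij'].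
  exact: tied_common ij ij'.
have row := sum_char_vec_row_ge i2 i1 (others i1 i2).
have pairs := sum_distinct_pairs_char_vec_ge T_sub T_tied.
have ties := tie_count_bound R (W i2 i1) #|T|.
have card_m : #|others i1 i2|%:R = (n - 4)%:R + 2 :> R.
  by rewrite card_others // (_ : n - 2 = n - 4 + 2)%N ?natrD //; lia.
have -> : ((n - 3) * (n - 4))%:R = ((n - 4)%:R + 1) * (n - 4)%:R :> R.
  by rewrite (_ : n - 3 = n - 4 + 1)%N ?natrM ?natrD //; lia.
move: row pairs ties; rewrite card_m /char_vec -/T.
move: (W i2 i1)%:R #|T|%:R (n - 4)%:R (\sum_(j in _) _) (sum_distinct_pairs _ _).
move=> a e k S2 S3; lra.
Qed.

End WeakOrderVertex.


Lemma wo_form_mix (R : numDomainType) (n : nat) (J : finType) (lam : J -> R)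
    (y : J -> 'I_n -> 'I_n -> R) (x : 'I_n -> 'I_n -> R) (i1 i2 : 'I_n) :
  (forall i j, i != j -> x i j = \sum_t lam t * y t i j) -> i1 != i2 ->
  wo_form i1 i2 x = \sum_t lam t * wo_form i1 i2 (y t).
Proof.
move=> x_mix i12.
have others_neq j : j \in others i1 i2 -> (j != i1) && (j != i2) by rewrite inE.
rewrite /wo_form /sum_distinct_pairs big_split /= x_mix 1?eq_sym //.
rewrite (sum_weighted_exchange (lam := lam) (G := fun j t => y t i1 j));
  last first.
  by move=> j /others_neq/andP[ne1 _]; rewrite x_mix // eq_sym.
rewrite (sum_weighted_exchange (lam := lam) (G := fun j t => y t j i1));
  last first.
  by move=> j /others_neq/andP[ne1 _]; rewrite x_mix.
rewrite (sum_weighted_exchange (lam := lam) (G := fun j t => y t i2 j));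
  last first.
  by move=> j /others_neq/andP[_ ne2]; rewrite x_mix // eq_sym.
rewrite (sum_weighted_exchange (lam := lam)
  (G := fun j t => \sum_(j' in others i1 i2 | j' != j) y t j j')); last first.
  move=> j _; apply: sum_weighted_exchange => j' /andP[_ ne].
  by rewrite x_mix // eq_sym.
rewrite -!big_split -!sumrB; apply: eq_bigr => t _.
by rewrite big_split /= !mulrDr !mulrN.
Qed.

Theorem mainTheorem4 (R : realFieldType) (n : nat) (i1 i2 : 'I_n)
    (x : 'I_n -> 'I_n -> R) :
  (4 <= n)%N -> i1 != i2 -> in_weak_order_polytope x ->
  let Nc := [set j : 'I_n | (j != i1) && (j != i2)] in
  x i2 i1 + \sum_(j in Nc) (x i1 j + x j i1)
    - \sum_(j in Nc) x i2 j
    - \sum_(j in Nc) \sum_(j' in Nc | j' != j) x j j'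
  <= 2 - ((n - 3) * (n - 4))%:R / 2.
Proof.
move=> n4 i12 [k [W [lam [W_wo lam_ge0 lam_sum1 x_mix]]]].
change (wo_form i1 i2 x <= 2 - ((n - 3) * (n - 4))%:R / 2).
rewrite (wo_form_mix x_mix i12); apply: convex_sum_le => // t.
have [_ [W_trans W_total]] := W_wo t.
exact: wo_form_char_vec_le.
Qed.
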